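(* Let $X$ be a Tychonoff $\Delta$-space and let $\varphi:X\to Y$ be a closed continuous surjection onto a Tychonoff space $Y$ all of whose fibers $\varphi^{-1}(y)$ are finite. Then $Y$ is a $\Delta$-space.
   Context: A topological space $X$ is a $\Delta$-space if for every decreasing sequence $\{D_n:n\in\omega\}$ of subsets of $X$ with $\bigcap_n D_n=\emptyset$ there is a decreasing sequence $\{V_n:n\in\omega\}$ of open subsets of $X$ with $D_n\subseteq V_n$ for all $n$ and $\bigcap_n V_n=\emptyset$. *)

From HB Require Import structures.
From mathcomp Require Import all_boot all_order all_algebra.
From mathcomp Require Import all_classical all_reals all_analysis.
Set Implicit Arguments. Unset Strict Implicit. Unset Printing Implicit Defensive.
Local Open Scope classical_set_scope.

Definition tychonoff_space (T : topologicalType) : Prop :=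
  accessible_space T /\ completely_regular_space T.

Definition delta_space (T : topologicalType) : Prop :=
  forall D : nat -> set T,
    (forall n, D n.+1 `<=` D n) ->
    \bigcap_n D n = set0 ->
    exists V : nat -> set T,
      [/\ (forall n, open (V n)),
          (forall n, V n.+1 `<=` V n),
          (forall n, D n `<=` V n) &
          \bigcap_n V n = set0].

Definition closed_map (X Y : topologicalType) (f : X -> Y) : Prop :=
  forall A : set X, closed A -> closed (f @` A).

From mathcomp Require Import all_boot all_order all_algebra.
From mathcomp Require Import all_classical all_reals all_analysis.
Set Implicit Arguments. Unset Strict Implicit. Unset Printing Implicit Defensive.
Local Open Scope classical_set_scope.

(* The Delta-property passes to images under closed surjections.

   Given a decreasing sequence (D n) in Y with empty intersection, its
   preimages (phi^-1 D n) form such a sequence in X, so the Delta-property of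
   X yields open U n covering them, decreasing, with empty intersection.
   They are pushed back to Y through the "small image"
       small_image phi U = Y \ phi (X \ U),
   the set of points whose whole fibre lies in U.  It is open for open U when
   phi is closed, it is monotone, it contains D whenever phi^-1 D is
   contained in U, and (by surjectivity) a point in the small image of every
   U n has a preimage in the intersection of the U n, which is empty. *)

Section SmallImage.
Variables (X Y : topologicalType) (phi : X -> Y).

Definition small_image (U : set X) : set Y := ~` (phi @` ~` U).

Lemma small_imageP (U : set X) (y : Y) :
  small_image U y <-> (forall x, phi x = y -> U x).
Proof.
split=> [yU x xy | fibU [x nUx xy]]; last exact/nUx/fibU.
by apply: contrapT => nUx; apply: yU; exists x.
Qed.

Lemma open_small_image (U : set X) :
  closed_map phi -> open U -> open (small_image U).
Proof. by move=> cl oU; apply/closed_openC/cl/open_closedC. Qed.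

Lemma small_image_sub (U V : set X) :
  U `<=` V -> small_image U `<=` small_image V.
Proof.
by move=> UV y /small_imageP yU; apply/small_imageP => x /yU /UV.
Qed.

Lemma sub_small_image (D : set Y) (U : set X) :
  phi @^-1` D `<=` U -> D `<=` small_image U.
Proof. by move=> DU y Dy; apply/small_imageP => x xy; apply: DU; rewrite /= xy. Qed.

Lemma bigcap_small_image (U : nat -> set X) :
  (forall y, exists x, phi x = y) ->
  \bigcap_n U n = set0 -> \bigcap_n small_image (U n) = set0.
Proof.
move=> surj U0; apply/seteqP; split=> // y yU.
have [x xy] := surj y.
have : (\bigcap_n U n) x by move=> n _; exact: (small_imageP _ _).1 (yU n I) x xy.
by rewrite U0.
Qed.

End SmallImage.

Lemma bigcap_preimage (X Y : Type) (phi : X -> Y) (D : nat -> set Y) :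
  \bigcap_n D n = set0 -> \bigcap_n (phi @^-1` D n) = set0.
Proof.
move=> D0; apply/seteqP; split=> // x Dx.
have : (\bigcap_n D n) (phi x) by move=> n _; exact: Dx n I.
by rewrite D0.
Qed.

Lemma closed_surjection_delta_space (X Y : topologicalType) (phi : X -> Y) :
  delta_space X -> closed_map phi -> (forall y, exists x, phi x = y) ->
  delta_space Y.
Proof.
move=> dX cl surj D Ddec D0.
have [U [Uo Udec DU U0]] :=
  dX (fun n => phi @^-1` D n) (fun n x => @Ddec n (phi x)) (bigcap_preimage phi D0).
exists (fun n => small_image phi (U n)); split.
- by move=> n; exact: open_small_image.
- by move=> n; exact: small_image_sub.
- by move=> n; exact: sub_small_image.
- exact: bigcap_small_image.
Qed.

Theorem proposition5p3 (X Y : topologicalType) (phi : X -> Y) :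
  tychonoff_space X -> delta_space X ->
  tychonoff_space Y ->
  continuous phi -> closed_map phi -> (forall y : Y, exists x : X, phi x = y) ->
  (forall y : Y, finite_set (phi @^-1` [set y])) ->
  delta_space Y.
Proof.
move=> _ dX _ _ cl surj _.
exact: closed_surjection_delta_space dX cl surj.
Qed.
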